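(* Let $K\ge3$ and let all arms share the same exponential family with log-partition function $\mathcal{A}$ on an open convex $\Psi\subset\mathbb{R}^d$ (minimal representation, $\mathcal{A}$ strictly convex and $C^2$ with positive definite Hessian, conjugate $\mathcal{F}$ strictly convex and $C^2$). Let $\boldsymbol{\theta}\ne\boldsymbol{\theta}'\in\Psi$ with expectation parameters $\boldsymbol{\kappa}=\nabla\mathcal{A}(\boldsymbol{\theta})$, $\boldsymbol{\kappa}'=\nabla\mathcal{A}(\boldsymbol{\theta}')$. Put $c=\frac{K-2}{K-1}$ and, for $\lambda\in[0,1]$, $$\tilde{\boldsymbol{\kappa}}(\lambda)=\frac{\lambda\boldsymbol{\kappa}+(1-\lambda)c\,\boldsymbol{\kappa}'}{\lambda+(1-\lambda)c},\qquad\tilde{\boldsymbol{\eta}}(\lambda)=\nabla\mathcal{F}(\tilde{\boldsymbol{\kappa}}(\lambda)),$$ $$\Phi(\lambda)=\lambda D(\boldsymbol{\theta}\|\tilde{\boldsymbol{\eta}}(\lambda))+(1-\lambda)c\,D(\boldsymbol{\theta}'\|\tilde{\boldsymbol{\eta}}(\lambda)).$$ Then $\Phi$ is twice differentiable on $(0,1)$ with $\Phi''(\lambda)<0$ there; in particular $\Phi$ is strictly concave on $[0,1]$.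
   Context: $D(\boldsymbol{\eta}\|\boldsymbol{\eta}')=(\boldsymbol{\eta}-\boldsymbol{\eta}')^T\nabla\mathcal{A}(\boldsymbol{\eta})-\mathcal{A}(\boldsymbol{\eta})+\mathcal{A}(\boldsymbol{\eta}')$ is the Kullback–Leibler divergence between the family members with natural parameters $\boldsymbol{\eta}$ and $\boldsymbol{\eta}'$; $\nabla\mathcal{F}$ is the inverse of $\nabla\mathcal{A}$, and $\tilde{\boldsymbol{\kappa}}(\lambda)$ is assumed to lie in the domain where $\nabla\mathcal{F}$ maps into $\Psi$. (In the odd-arm problem, hypothesis $l$ is $\Theta_l=\{\overline{\boldsymbol{\eta}}:\boldsymbol{\eta}_l=\boldsymbol{\theta},\ \boldsymbol{\eta}_j=\boldsymbol{\theta}'\ \forall j\ne l,\ \boldsymbol{\theta}\ne\boldsymbol{\theta}'\}$, and $\Phi(\lambda)$ is the reduced objective obtained when weight $\lambda$ is put on the odd arm and weight $(1-\lambda)/(K-1)$ on each other arm.) *)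

From HB Require Import structures.
From mathcomp Require Import all_boot all_order all_algebra.
From mathcomp Require Import all_classical all_reals all_analysis.
Set Implicit Arguments. Unset Strict Implicit. Unset Printing Implicit Defensive.
Import Order.TTheory GRing.Theory Num.Theory.
Import numFieldNormedType.Exports.
Local Open Scope classical_set_scope.
Local Open Scope ring_scope.

Definition dotv (R : realType) (d : nat) (u v : 'rV[R]_d) : R := (u *m v^T) 0 0.

Definition convex_setv (R : realType) (d : nat) (S : set 'rV[R]_d) : Prop :=
  forall x y, S x -> S y -> forall t : R, 0 <= t <= 1 ->
    S (t *: x + (1 - t) *: y).

Definition strictly_convex_on (R : realType) (d : nat) (S : set 'rV[R]_d)
  (f : 'rV[R]_d -> R) : Prop :=
  forall x y, S x -> S y -> x != y -> forall t : R, 0 < t < 1 ->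
    f (t *: x + (1 - t) *: y) < t * f x + (1 - t) * f y.

Definition strictly_concave_on (R : realType) (S : set R) (f : R -> R) : Prop :=
  forall x y, S x -> S y -> x != y -> forall t : R, 0 < t < 1 ->
    t * f x + (1 - t) * f y < f (t * x + (1 - t) * y).

(* KL divergence via the Bregman form:
   D(eta || eta') = (eta - eta')^T gradA(eta) - A(eta) + A(eta'). *)
Definition KLdiv (R : realType) (d : nat) (A : 'rV[R]_d -> R)
  (gA : 'rV[R]_d -> 'rV[R]_d) (eta eta' : 'rV[R]_d) : R :=
  dotv (eta - eta') (gA eta) - A eta + A eta'.

Definition cK (R : realType) (K : nat) : R := (K - 2)%:R / (K - 1)%:R.

Definition kappa_tilde (R : realType) (d : nat) (K : nat) (kap kap' : 'rV[R]_d)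
  (l : R) : 'rV[R]_d :=
  (l + (1 - l) * cK R K)^-1 *: (l *: kap + ((1 - l) * cK R K) *: kap').

Definition Phi (R : realType) (d : nat) (K : nat) (A : 'rV[R]_d -> R)
  (gA gF : 'rV[R]_d -> 'rV[R]_d) (th th' : 'rV[R]_d) (l : R) : R :=
  let eta := gF (kappa_tilde K (gA th) (gA th') l) in
  l * KLdiv A gA th eta + (1 - l) * cK R K * KLdiv A gA th' eta.

From HB Require Import structures.
From mathcomp Require Import all_boot all_order all_algebra.
From mathcomp Require Import all_classical all_reals all_analysis.
From mathcomp Require Import ring lra.
Import Order.TTheory GRing.Theory Num.Theory.
Import numFieldNormedType.Exports.
Local Open Scope classical_set_scope.
Local Open Scope ring_scope.
Set Implicit Arguments. Unset Strict Implicit. Unset Printing Implicit Defensive.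

(* Write a = gradA(theta), b = gradA(theta'), c = (K-2)/(K-1) and
   s(l) = l + (1-l) c = c + (1-c) l.  The mean parameter kappa~(l) is the
   chord b + (l / s(l)) (a - b), so kappa~'(l) = (c / s(l)^2) (a - b), and by
   the chain rule eta~'(l) = (c / s(l)^2) w(l) with w(l) = dgradF(kappa~(l))(a-b).
   Since dA(eta) = <gradA(eta), .> and gradA(eta~(l)) = kappa~(l),
     d/dl D(x || eta~(l)) = <kappa~(l) - gradA(x), eta~'(l)>.
   Differentiating Phi, the terms in eta~' cancel by the envelope identity
   l (kappa~ - a) + (1-l) c (kappa~ - b) = 0, so
     Phi'(l)  = D(theta || eta~(l)) - c D(theta' || eta~(l)),
     Phi''(l) = <(1-c) kappa~ - a + c b, eta~'> = -(c/s)(c/s^2) <a - b, w(l)>.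
   Differentiating gradA o gradF = id along the path gives dgradA(eta~) w = a - b,
   so <a - b, w> = <w, dgradA(eta~) w> > 0 by positive definiteness of the
   Hessian, hence Phi'' < 0 on (0,1).  Strict concavity on [0,1] then follows
   from a general mean-value argument: a function whose derivative is strictly
   decreasing on the interior of an interval is strictly concave on it. *)

Lemma is_derive_ext (R : realType) (V W : normedModType R) (f g : V -> W) x v df :
  f =1 g -> is_derive x v f df -> is_derive x v g df.
Proof. by move=> /funext ->. Qed.

Lemma is_derive_entry (R : realType) (V : normedModType R) (m n : nat)
    (M : V -> 'M[R]_(m, n)) (dM : 'M[R]_(m, n)) t v i j :
  is_derive t v M dM -> is_derive t v (fun x => M x i j) (dM i j).
Proof.
move=> hM; have dMv : derivable M t v by [].
apply: DeriveDef; first by move/derivable_mxP : dMv.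
by rewrite -(derive_val (is_derive := hM)) derive_mx // mxE.
Qed.

Lemma is_derive_dotvl (R : realType) (V : normedModType R) (d : nat)
    (g : V -> 'rV[R]_d) (dg u : 'rV[R]_d) t v :
  is_derive t v g dg -> is_derive t v (fun x => dotv (g x) u) (dotv dg u).
Proof.
move=> hg.
have dotvE (w : 'rV[R]_d) : dotv w u = \sum_(j < d) u 0 j *: w 0 j.
  by rewrite /dotv mxE; apply: eq_bigr => j _; rewrite mxE mulrC.
rewrite dotvE; apply: is_derive_ext (is_derive_sum _) => [x|j].
  by rewrite dotvE fct_sumE.
exact: is_deriveZ (is_derive_entry _ _ hg).
Qed.

Lemma is_derive_scalel (R : realType) (W : normedModType R) (k : R -> R) (u : W)
    (x dk : R) :
  is_derive x 1 k dk -> is_derive x 1 (fun z => k z *: u) (dk *: u).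
Proof.
move=> hk; have dk1 : differentiable k x by apply/derivable1_diffP.
apply: DeriveDef; first exact/derivable1_diffP/differentiableZl.
rewrite deriveE; last exact: differentiableZl.
by rewrite diffZl // -deriveE // derive_val.
Qed.

Lemma is_derive_div_affine (R : realType) (p q l : R) : p + q * l != 0 ->
  is_derive l 1 (fun x : R => x / (p + q * x)) (p / (p + q * l) ^+ 2).
Proof.
move=> hl.
have haff : is_derive l (1 : R) (fun x : R => p + q * x) q.
  have h := is_deriveD (is_derive_cst p l 1) (is_deriveZ q (is_derive_id l 1)).
  apply: is_derive_ext (is_derive_eq h _) => [x //|].
  by rewrite add0r /GRing.scale /= mulr1.
have h := is_deriveM (is_derive_id l 1)
  (@is_deriveV _ (fun x : R => p + q * x) _ _ _ hl haff).
apply: is_derive_ext (is_derive_eq h _) => [x //|].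
by rewrite /GRing.scale /=; field.
Qed.

Lemma is_derive_comp_diff (R : realType) (U W : normedModType R) (f : R -> U)
    (g : U -> W) (x : R) :
  differentiable f x -> differentiable g (f x) ->
  is_derive x 1 (g \o f) ('d g (f x) ('d f x 1)).
Proof.
move=> df dg; have dgf := differentiable_comp df dg.
apply: DeriveDef; first exact: diff_derivable.
by rewrite deriveE // diff_comp.
Qed.

Section ConcavityFromDerivative.
Variables (R : realType) (f f' : R -> R) (a b : R).
Hypothesis f_deriv : forall x, a <= x <= b -> is_derive x 1 f (f' x).

Lemma mvt_subinterval (x y : R) : a <= x -> x < y -> y <= b ->
  exists2 z, x < z < y & f y - f x = f' z * (y - x).
Proof.
move=> ax xy yb.
have inab z : x <= z <= y -> a <= z <= b.
  by case/andP=> xz zy; rewrite (le_trans ax xz) (le_trans zy yb).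
have hd z : z \in `]x, y[ -> is_derive z 1 f (f' z).
  by rewrite in_itv => /andP[xz zy]; apply/f_deriv/inab; rewrite !ltW.
have hc : {within `[x, y], continuous f}.
  apply: derivable_within_continuous => z; rewrite in_itv => /inab/f_deriv fz.
  exact: ex_derive.
have [z] := MVT xy hd hc; rewrite in_itv => zxy e.
by exists z.
Qed.

Hypothesis f'_decr : forall u v, a < u -> u < v -> v < b -> f' v < f' u.

(* A strictly decreasing derivative makes f strictly concave: the slopes of f
   on [x, z] and [z, y] are values of f' at points p < q. *)
Lemma strictly_concave_of_decreasing_derivative : strictly_concave_on `[a, b] f.
Proof.
have key x y t : a <= x -> x < y -> y <= b -> 0 < t < 1 ->
    t * f x + (1 - t) * f y < f (t * x + (1 - t) * y).
  move=> ax xy yb /andP[t0 t1]; set z := t * x + (1 - t) * y.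
  have xz : x < z by rewrite /z; nra.
  have zy : z < y by rewrite /z; nra.
  have [p /andP[xp pz] ep] := mvt_subinterval ax xz (ltW (lt_le_trans zy yb)).
  have [q /andP[zq qy] eq] := mvt_subinterval (ltW (le_lt_trans ax xz)) zy yb.
  have f'pq : f' q < f' p.
    by apply: f'_decr; [exact: le_lt_trans ax xp | exact: lt_trans pz zq
                        | exact: lt_le_trans qy yb].
  have gap : t * f x + (1 - t) * f y = f z - t * (1 - t) * (y - x) * (f' p - f' q).
    have -> : f x = f z - f' p * (z - x) by rewrite -ep; ring.
    have -> : f y = f z + f' q * (y - z) by rewrite -eq; ring.
    by rewrite /z; ring.
  rewrite gap ltrBlDr ltrDl !mulr_gt0 // subr_gt0 //; lra.
move=> x y; rewrite /= !in_itv /= => /andP[ax xb] /andP[ay yb] + t ht.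
case: (ltgtP x y) => // [xy | yx] _; first exact: key.
have ht' : 0 < 1 - t < 1 by case/andP: ht => t0 t1; apply/andP; split; lra.
have := key y x (1 - t) ay yx xb ht'.
have -> : 1 - (1 - t) = t by ring.
by rewrite addrC [(1 - t) * y + _]addrC.
Qed.

End ConcavityFromDerivative.

Section Dot.
Variables (R : realType) (d : nat).
Implicit Types u v w : 'rV[R]_d.

Lemma dotvC u v : dotv u v = dotv v u.
Proof. by rewrite /dotv -[in RHS](trmxK (v *m u^T)) trmx_mul trmxK [RHS]mxE. Qed.

Lemma dotvDl u v w : dotv (u + v) w = dotv u w + dotv v w.
Proof. by rewrite /dotv mulmxDl mxE. Qed.

Lemma dotvZl k u v : dotv (k *: u) v = k * dotv u v.
Proof. by rewrite /dotv -scalemxAl mxE. Qed.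

Lemma dotvNl u v : dotv (- u) v = - dotv u v.
Proof. by rewrite -scaleN1r dotvZl mulN1r. Qed.

Lemma dotvBl u v w : dotv (u - v) w = dotv u w - dotv v w.
Proof. by rewrite dotvDl dotvNl. Qed.

End Dot.

Lemma cK_bounds (R : realType) (K : nat) : (3 <= K)%N -> 0 < cK R K < 1.
Proof.
move=> K3; rewrite /cK.
have -> : (K - 1)%N = (K - 2).+1 by rewrite -subSn ?subSS //; apply: leq_trans K3.
have K2 : (0 : R) < (K - 2)%:R by rewrite ltr0n subn_gt0 (leq_trans _ K3).
apply/andP; split; first exact: divr_gt0 K2 (ltr0Sn _ _).
by rewrite ltr_pdivrMr ?ltr0Sn // mul1r ltr_nat.
Qed.

(* The total weight l + (1 - l) c, the denominator of kappa~(l),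
   written as an affine function of l. *)
Definition path_weight (R : realType) (K : nat) (l : R) : R :=
  cK R K + (1 - cK R K) * l.

Section MeanParameterPath.
Variables (R : realType) (d K : nat) (a b : 'rV[R]_d).
Hypothesis K3 : (3 <= K)%N.

Local Notation c := (cK R K).
Local Notation s := (@path_weight R K).
Local Notation kt := (kappa_tilde K a b).

Lemma path_weightE (l : R) : l + (1 - l) * c = s l.
Proof. by rewrite /path_weight; ring. Qed.

(* The weight stays positive slightly to the left of 0, so kappa~ is smooth
   on a neighbourhood of [0, 1]. *)
Lemma path_weight_gt0 (l : R) : - c < l -> 0 < s l.
Proof.
move=> cl; have /andP[c0 c1] := @cK_bounds R K K3.
have : 0 < (1 - c) * (l + c) by apply: mulr_gt0; lra.
have : 0 < c * c by rewrite mulr_gt0.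
rewrite /path_weight; nra.
Qed.

Lemma path_weight_pos (l : R) : 0 <= l -> 0 < s l.
Proof.
move=> l0; apply: path_weight_gt0.
by have /andP[c0 _] := @cK_bounds R K K3; lra.
Qed.

Lemma kappa_tilde_mix (l : R) : 0 < s l ->
  s l *: kt l = l *: a + ((1 - l) * c) *: b.
Proof.
move=> s0; rewrite /kappa_tilde path_weightE scalerA mulfV ?scale1r //.
exact: lt0r_neq0.
Qed.

Lemma kappa_tilde_chord (l : R) : 0 < s l -> kt l = b + (l / s l) *: (a - b).
Proof.
move=> s0; have sN0 := lt0r_neq0 s0.
apply/rowP => j; rewrite /kappa_tilde path_weightE !mxE.
by move: sN0; rewrite /path_weight => sN0; field.
Qed.

Lemma is_derive_kappa_tilde (l : R) : 0 <= l ->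
  is_derive l 1 kt ((c / s l ^+ 2) *: (a - b)).
Proof.
move=> l0; have /andP[c0 _] := @cK_bounds R K K3.
have s_near : \forall x \near l, 0 < s x.
  have : l \in `]- c, l + 1[ by rewrite in_itv /=; apply/andP; split; lra.
  move/near_in_itvoo; apply: filterS => x; rewrite in_itv => /andP[cx _].
  exact: path_weight_gt0.
have chord_near : \forall x \near l, b + (x / s x) *: (a - b) = kt x.
  by apply: filterS s_near => x /kappa_tilde_chord ->.
apply: near_eq_is_derive chord_near _.
have sN0 : c + (1 - c) * l != 0 by exact/lt0r_neq0/path_weight_pos.
have h := is_deriveD (is_derive_cst b l 1)
  (is_derive_scalel (a - b) (is_derive_div_affine sN0)).
by apply: is_derive_eq h _; rewrite add0r.
Qed.

Lemma kappa_tilde_second_order (l : R) : 0 < s l ->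
  (1 - c) *: kt l - a + c *: b = (- (c / s l)) *: (a - b).
Proof.
move=> s0; have sN0 := lt0r_neq0 s0; rewrite kappa_tilde_chord //.
apply/rowP => j; rewrite !mxE.
by move: sN0; rewrite /path_weight => sN0; field.
Qed.

(* Envelope identity: the weighted deviations of kappa~ from a and b cancel,
   which removes every derivative of eta~ from Phi'. *)
Lemma envelope_identity (l : R) (v : 'rV[R]_d) : 0 < s l ->
  l * dotv (kt l - a) v + (1 - l) * c * dotv (kt l - b) v = 0.
Proof.
move=> s0; move: (kt l) (kappa_tilde_mix s0) => k mix.
have {}mix := congr1 (fun u => dotv u v) mix.
rewrite /= dotvZl dotvDl !dotvZl -path_weightE in mix.
rewrite !dotvBl.
have -> : l * (dotv k v - dotv a v) + (1 - l) * c * (dotv k v - dotv b v)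
    = (l + (1 - l) * c) * dotv k v - (l * dotv a v + (1 - l) * c * dotv b v).
  by ring.
by rewrite mix subrr.
Qed.

End MeanParameterPath.

Section NaturalParameterPath.
Variables (R : realType) (d K : nat) (Psi : set 'rV[R]_d) (A : 'rV[R]_d -> R)
  (gA gF : 'rV[R]_d -> 'rV[R]_d) (th th' : 'rV[R]_d).
Hypothesis K3 : (3 <= K)%N.
Hypothesis A_grad :
  forall x, Psi x -> differentiable A x /\ forall v, 'd A x v = dotv (gA x) v.
Hypothesis gA_diff : forall x, Psi x -> differentiable gA x.
Hypothesis hessian_pd : forall x v, Psi x -> v != 0 -> 0 < dotv v ('d gA x v).
Hypothesis gF_gA : forall x, Psi x -> gF (gA x) = x.
Hypothesis gA_gF : forall k, (gA @` Psi) k -> Psi (gF k) /\ gA (gF k) = k.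
Hypothesis gF_diff : forall k, (gA @` Psi) k -> differentiable gF k.
Hypotheses (th_in : Psi th) (th'_in : Psi th') (th_neq : th != th').
Hypothesis path_in :
  forall l : R, 0 <= l <= 1 -> (gA @` Psi) (kappa_tilde K (gA th) (gA th') l).

Local Notation c := (cK R K).
Local Notation s := (@path_weight R K).
Local Notation a := (gA th).
Local Notation b := (gA th').
Local Notation kt := (kappa_tilde K a b).
Local Notation eta := (fun l => gF (kt l)).
Let w (l : R) : 'rV[R]_d := 'd gF (kt l) (a - b).
Local Notation deta l := ((c / s l ^+ 2) *: w l).

Lemma mean_params_neq : a - b != 0.
Proof.
rewrite subr_eq0; apply: contra th_neq => /eqP ab.
by rewrite -(gF_gA th_in) -(gF_gA th'_in) ab.
Qed.

Lemma is_derive_eta (l : R) : 0 <= l <= 1 -> is_derive l 1 eta (deta l).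
Proof.
move=> /[dup] l01 /andP[l0 _].
have dkt := is_derive_kappa_tilde a b K3 l0.
have dkt1 : differentiable kt l by apply/derivable1_diffP.
have dkt_val : 'd kt l 1 = (c / s l ^+ 2) *: (a - b).
  by rewrite -deriveE // (derive_val (is_derive := dkt)).
have := is_derive_comp_diff dkt1 (gF_diff (path_in l01)).
by rewrite dkt_val linearZ.
Qed.

(* d/dl D(x || eta~(l)) = <kappa~(l) - gradA(x), eta~'(l)>, because
   dA(eta~(l)) = <kappa~(l), .>. *)
Lemma is_derive_KL (x : 'rV[R]_d) (l : R) : Psi x -> 0 <= l <= 1 ->
  is_derive l 1 (fun y => KLdiv A gA x (eta y)) (dotv (kt l - gA x) (deta l)).
Proof.
move=> x_in l01; have deta_l := is_derive_eta l01.
have [eta_in gA_eta] := gA_gF (path_in l01).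
have [dA dA_grad] := A_grad eta_in.
have dA_eta : is_derive l 1 (fun y => A (eta y)) (dotv (kt l) (deta l)).
  have deta1 : differentiable eta l by apply/derivable1_diffP; exact: ex_derive.
  have := is_derive_comp_diff deta1 dA.
  by rewrite dA_grad gA_eta -deriveE // (derive_val (is_derive := deta_l)).
have dinner := is_derive_dotvl (gA x) (is_deriveB (is_derive_cst x l 1) deta_l).
have h := is_deriveD (is_deriveB dinner (is_derive_cst (A x) l 1)) dA_eta.
apply: is_derive_ext (is_derive_eq h _) => [y //|].
by rewrite sub0r dotvNl subr0 dotvBl [dotv (deta l) _]dotvC addrC.
Qed.

Local Notation Phi0 := (Phi K A gA gF th th').
Local Notation dPhi l := (KLdiv A gA th (eta l) - c * KLdiv A gA th' (eta l)).

(* First derivative of Phi: the envelope identity kills the eta~' terms. *)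
Lemma is_derive_Phi (l : R) : 0 <= l <= 1 -> is_derive l 1 Phi0 (dPhi l).
Proof.
move=> /[dup] l01 /andP[l0 _].
have dKa := is_derive_KL th_in l01; have dKb := is_derive_KL th'_in l01.
have dweight := is_deriveM (is_deriveB (is_derive_cst (1 : R) l 1) (is_derive_id l 1))
  (is_derive_cst c l 1).
have h := is_deriveD (is_deriveM (is_derive_id l 1) dKa) (is_deriveM dweight dKb).
apply: is_derive_ext (is_derive_eq h _) => [y //|].
have := envelope_identity a b (deta l) (path_weight_pos K3 l0).
have -> : ((cst 1 - id) * cst c) l = (1 - l) * c by [].
rewrite /GRing.scale /= mulr0 mulr1; lra.
Qed.

Local Notation ddPhi l := (- (c / s l) * (c / s l ^+ 2) * dotv (a - b) (w l)).

Lemma is_derive_dPhi (l : R) : 0 <= l <= 1 ->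
  is_derive l 1 (fun y => dPhi y) (ddPhi l).
Proof.
move=> /[dup] l01 /andP[l0 _].
have h := is_deriveB (is_derive_KL th_in l01) (is_deriveZ c (is_derive_KL th'_in l01)).
apply: is_derive_ext (is_derive_eq h _) => [y //|].
have second := kappa_tilde_second_order a b (path_weight_pos K3 l0).
move: (kt l) (w l) second => k u second.
have -> : dotv (k - a) ((c / s l ^+ 2) *: u) - c *: dotv (k - b) ((c / s l ^+ 2) *: u)
    = dotv ((1 - c) *: k - a + c *: b) ((c / s l ^+ 2) *: u).
  by rewrite /GRing.scale /= !dotvDl !dotvNl !dotvZl; ring.
by rewrite second dotvZl dotvC dotvZl dotvC; ring.
Qed.

(* Differentiating gradA(eta~) = kappa~ shows dgradA(eta~(l)) w(l) = a - b, so
   <a - b, w(l)> is the Hessian quadratic form at the nonzero vector w(l). *)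
Lemma curvature_pos (l : R) : 0 < l < 1 -> 0 < dotv (a - b) (w l).
Proof.
move=> /andP[l0 l1]; have l01 : 0 <= l <= 1 by rewrite !ltW.
have [eta_in _] := gA_gF (path_in l01).
have deta_l := is_derive_eta l01.
have deta1 : differentiable eta l by apply/derivable1_diffP; exact: ex_derive.
have gA_eta_near : \forall y \near l, gA (eta y) = kt y.
  have : l \in `]0, 1[ by rewrite in_itv; apply/andP.
  move/near_in_itvoo; apply: filterS => y; rewrite in_itv => /andP[y0 y1].
  by have [] := gA_gF (path_in (l := y) _); rewrite ?ltW.
have deta_val : 'd eta l 1 = deta l.
  by rewrite -deriveE // (derive_val (is_derive := deta_l)).
have dcomp := is_derive_comp_diff deta1 (gA_diff eta_in).
rewrite deta_val in dcomp.
have dkt : is_derive l 1 kt ('d gA (eta l) (deta l)) :=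
  near_eq_is_derive gA_eta_near dcomp.
have /andP[c0 _] := @cK_bounds R K K3.
have cs0 : c / s l ^+ 2 != 0.
  by rewrite mulf_neq0 ?invr_eq0 ?expf_neq0 ?lt0r_neq0 ?path_weight_pos ?ltW.
have hess_w : 'd gA (eta l) (w l) = a - b.
  have dkt' := is_derive_kappa_tilde a b K3 (ltW l0).
  apply: (scalerI cs0); rewrite -linearZ -(derive_val (is_derive := dkt)).
  by rewrite (derive_val (is_derive := dkt')).
move: (w l) hess_w => u hess_u.
have u_neq0 : u != 0.
  by apply: contraNneq mean_params_neq => u0; rewrite -hess_u u0 linear0.
by rewrite dotvC -hess_u; apply: hessian_pd.
Qed.

Lemma ddPhi_neg (l : R) : 0 < l < 1 -> ddPhi l < 0.
Proof.
move=> /[dup] l01 /andP[l0 _]; have s0 := path_weight_pos K3 (ltW l0).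
have /andP[c0 _] := @cK_bounds R K K3.
have cs1 : 0 < c / s l by rewrite divr_gt0.
have cs2 : 0 < c / s l ^+ 2 by rewrite divr_gt0 ?exprn_gt0.
by rewrite !mulNr oppr_lt0 (mulr_gt0 (mulr_gt0 cs1 cs2) (curvature_pos l01)).
Qed.

Lemma Phi_second_derivative_neg (l : R) : 0 < l < 1 ->
  derivable Phi0 l 1 /\ derivable (derive1 Phi0) l 1 /\
  derive1 (derive1 Phi0) l < 0.
Proof.
move=> /andP[l0 l1]; have l01 : 0 <= l <= 1 by rewrite !ltW.
have dPhi_near : \forall y \near l, dPhi y = derive1 Phi0 y.
  have : l \in `]0, 1[ by rewrite in_itv; apply/andP.
  move/near_in_itvoo; apply: filterS => y; rewrite in_itv => /andP[y0 y1].
  by rewrite derive1E (derive_val (is_derive := is_derive_Phi _)) ?ltW.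
have ddPhi_l := near_eq_is_derive dPhi_near (is_derive_dPhi l01).
split; first exact: (ex_derive (is_derive := is_derive_Phi l01)).
split; first exact: ex_derive.
rewrite derive1E (derive_val (is_derive := ddPhi_l)).
by apply: ddPhi_neg; apply/andP.
Qed.

Lemma dPhi_decreasing (u v : R) : 0 < u -> u < v -> v < 1 -> dPhi v < dPhi u.
Proof.
move=> u0 uv v1.
have [z /andP[uz zv] /= mvt] :=
  mvt_subinterval (f := fun y => dPhi y) is_derive_dPhi (ltW u0) uv (ltW v1).
rewrite -subr_lt0 mvt pmulr_llt0 ?subr_gt0 //; apply: ddPhi_neg.
by rewrite (lt_trans u0 uz) (lt_trans zv v1).
Qed.

Lemma Phi_strictly_concave : strictly_concave_on `[0, 1] Phi0.
Proof.
exact: strictly_concave_of_decreasing_derivative is_derive_Phi dPhi_decreasing.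
Qed.

End NaturalParameterPath.

Theorem mainTheorem16 (R : realType) (d K : nat) (Psi : set 'rV[R]_d)
  (A : 'rV[R]_d -> R) (gA gF : 'rV[R]_d -> 'rV[R]_d) (th th' : 'rV[R]_d) :
  (3 <= K)%N ->
  open Psi -> convex_setv Psi ->
  (* A is C^2 on Psi with gradient gA and positive definite Hessian 'd gA *)
  (forall x, Psi x -> differentiable A x /\ forall v, 'd A x v = dotv (gA x) v) ->
  (forall x, Psi x -> differentiable gA x) ->
  (forall v, {within Psi, continuous (fun x => 'd gA x v)}) ->
  (forall x v, Psi x -> v != 0 -> 0 < dotv v ('d gA x v)) ->
  strictly_convex_on Psi A ->
  (* gradF is the inverse of gradA, and F is C^2 on the mean-parameter set *)
  (forall x, Psi x -> gF (gA x) = x) ->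
  (forall k, (gA @` Psi) k -> Psi (gF k) /\ gA (gF k) = k) ->
  (forall k, (gA @` Psi) k -> differentiable gF k) ->
  (forall v, {within gA @` Psi, continuous (fun k => 'd gF k v)}) ->
  Psi th -> Psi th' -> th != th' ->
  (* kappa~(lambda) lies where gradF maps into Psi *)
  (forall l : R, 0 <= l <= 1 -> (gA @` Psi) (kappa_tilde K (gA th) (gA th') l)) ->
  (forall l : R, 0 < l < 1 ->
     derivable (Phi K A gA gF th th') l 1 /\
     derivable (derive1 (Phi K A gA gF th th')) l 1 /\
     derive1 (derive1 (Phi K A gA gF th th')) l < 0) /\
  strictly_concave_on `[0, 1] (Phi K A gA gF th th').
Proof.
move=> K3 _ _ A_grad gA_diff _ hessian_pd _ gF_gA gA_gF gF_diff _ th_in th'_in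
  th_neq path_in.
split.
- move=> l l01.
  exact: (Phi_second_derivative_neg K3 A_grad gA_diff hessian_pd gF_gA gA_gF
    gF_diff th_in th'_in th_neq path_in l01).
- exact: (Phi_strictly_concave K3 A_grad gA_diff hessian_pd gF_gA gA_gF gF_diff
    th_in th'_in th_neq path_in).
Qed.
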